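(* Let $\ast$ be a continuous $t$-norm and let $\{(X_n,M_n,\ast)\}_{n\in\mathbb N}$ be a sequence of nonempty compact non-Archimedean fuzzy metric spaces satisfying: (1) $\ast$ satisfies (TN1); (2) there exists a nondecreasing left-continuous function $C:(0,\infty)\to(0,1]$ with $0<C(s)\le\mathrm{diam}_s(X_n)$ for all $s>0$ and all $n$; (3) for every $t>0$ and $0<\varepsilon<1$ there is $N(\varepsilon,t)\in\mathbb N$ with $\mathrm{Cov}(X_n,\varepsilon,t)\le N(\varepsilon,t)$ for all $n$; (4) for every $t>0$ and $0<\varepsilon<1$, with $N=N(\varepsilon,t)$, there exist, for each $n$, a $(t,\varepsilon)$-net $\{x_i^n\}_{i=1}^N$ in $X_n$ such that for all $n,m$, all $s>t$ and all $i,j\in\{1,\dots,N\}$: if $M_n(x_i^n,x_j^n,s)<M_m(x_i^m,x_j^m,s)$ then $\dfrac{M_n(x_i^n,x_j^n,s)}{M_m(x_i^m,x_j^m,s)\ast(1-\varepsilon)}\ge\dfrac{M_n(x_i^n,x_j^n,t)}{M_m(x_i^m,x_j^m,t)\ast(1-\varepsilon)}$. Then $\{(X_n,M_n,\ast)\}_{n}$ has a Cauchy subsequence with respect to $M_{GH}$.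
   Context: A continuous $t$-norm is a binary operation $\ast:[0,1]\times[0,1]\to[0,1]$ which is associative, commutative, continuous, satisfies $a\ast 1=a$ for all $a$, and is monotone. Property (TN1): $a-a\ast b\ge a\ast(1-b)$ for all $a,b\in[0,1]$. A fuzzy metric space $(X,M,\ast)$: $M:X\times X\times[0,\infty)\to[0,1]$ with, for all $x,y,z$ and $t,s>0$: (KM1) $M(x,y,0)=0$; (KM2) $M(x,y,t)=1$ for all $t>0$ iff $x=y$; (KM3) $M(x,y,t)=M(y,x,t)$; (KM4) $M(x,y,t)\ast M(y,z,s)\le M(x,z,t+s)$; (KM5) $M(x,y,\cdot)$ left continuous on $[0,\infty)$. Non-Archimedean: $M(x,z,\max\{t,s\})\ge M(x,y,t)\ast M(y,z,s)$. Balls $B(x,\varepsilon,t)=\{y: M(x,y,t)>1-\varepsilon\}$ generate the topology; ''compact'' refers to it. $H_M(A,B,t)=\min\{\inf_{a\in A}\sup_{b\in B}M(a,b,t),\ \inf_{b\in B}\sup_{a\in A}M(a,b,t)\}$ for nonempty compact $A,B$. A fuzzy metric on $X\sqcup Y$ is admissible if it restricts to the given ones on $X$ and $Y$; $M_{GH}(X,Y,t)=\sup\{H_M(X,Y,t): M$ admissible non-Archimedean fuzzy metric on $X\sqcup Y$ with $t$-norm $\ast\}$. A sequence $(X_n)$ is Cauchy w.r.t. $M_{GH}$ if for every $t>0$, $0<\varepsilon<1$ there is $n_0$ with $M_{GH}(X_n,X_m,t)>1-\varepsilon$ for all $n,m\ge n_0$. A family $\{x_i\}_{i=1}^N$ is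 a $(t,\varepsilon)$-net in $X$ if each $x\in X$ has some $i$ with $M(x,x_i,t)>1-\varepsilon$. $\mathrm{Cov}(X,\varepsilon,t)$ is the minimal cardinality of $C\subseteq X$ with $X=\bigcup_{c\in C}B(c,\varepsilon,t)$. $\mathrm{diam}_s(X)=\inf\{M(x,y,s):x,y\in X\}$. *)

From Stdlib Require Import Reals List.
From Coquelicot Require Import Coquelicot.
Open Scope R_scope.

Definition in01 (a : R) : Prop := 0 <= a <= 1.

Definition cont_tnorm (star : R -> R -> R) : Prop :=
  (forall a b, in01 a -> in01 b -> in01 (star a b)) /\
  (forall a b c, in01 a -> in01 b -> in01 c ->
      star a (star b c) = star (star a b) c) /\
  (forall a b, in01 a -> in01 b -> star a b = star b a) /\
  (forall a, in01 a -> star a 1 = a) /\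
  (forall a b c d, in01 a -> in01 b -> in01 c -> in01 d ->
      a <= c -> b <= d -> star a b <= star c d) /\
  (forall a b, in01 a -> in01 b -> forall eps, 0 < eps -> exists delta, 0 < delta /\
      forall a' b', in01 a' -> in01 b' -> Rabs (a - a') < delta -> Rabs (b - b') < delta ->
        Rabs (star a b - star a' b') < eps).

Definition TN1 (star : R -> R -> R) : Prop :=
  forall a b, in01 a -> in01 b -> a - star a b >= star a (1 - b).

(* M x y t is only meaningful for t >= 0; values at t < 0 are ignored. *)
Definition fuzzy_metric {X : Type} (M : X -> X -> R -> R) (star : R -> R -> R) : Prop :=
  (forall x y t, 0 <= t -> in01 (M x y t)) /\
  (forall x y, M x y 0 = 0) /\
  (forall x y, (forall t, 0 < t -> M x y t = 1) <-> x = y) /\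
  (forall x y t, 0 < t -> M x y t = M y x t) /\
  (forall x y z t s, 0 < t -> 0 < s ->
      star (M x y t) (M y z s) <= M x z (t + s)) /\
  (forall x y t, 0 < t -> forall eps, 0 < eps -> exists delta, 0 < delta /\
      forall u, 0 <= u -> t - delta < u -> u <= t ->
        Rabs (M x y u - M x y t) < eps).

Definition non_archimedean {X : Type} (M : X -> X -> R -> R) (star : R -> R -> R) : Prop :=
  forall x y z t s, 0 < t -> 0 < s ->
    star (M x y t) (M y z s) <= M x z (Rmax t s).

Definition ball_f {X : Type} (M : X -> X -> R -> R) (x : X) (eps t : R) (y : X) : Prop :=
  M x y t > 1 - eps.

Definition fopen {X : Type} (M : X -> X -> R -> R) (U : X -> Prop) : Prop :=
  forall x, U x -> exists eps t, 0 < eps < 1 /\ 0 < t /\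
    forall y, ball_f M x eps t y -> U y.

Definition fcompact_space {X : Type} (M : X -> X -> R -> R) : Prop :=
  forall (I : Type) (U : I -> X -> Prop),
    (forall i, fopen M (U i)) -> (forall x, exists i, U i x) ->
    exists l : list I, forall x, exists i, In i l /\ U i x.

Definition sup_R (P : R -> Prop) : R := real (Lub_Rbar P).
Definition inf_R (P : R -> Prop) : R := real (Glb_Rbar P).

Definition H_sum {X Y : Type} (M : (X + Y) -> (X + Y) -> R -> R) (t : R) : R :=
  Rmin
    (inf_R (fun r => exists a : X, r = sup_R (fun u => exists b : Y, u = M (inl a) (inr b) t)))
    (inf_R (fun r => exists b : Y, r = sup_R (fun u => exists a : X, u = M (inl a) (inr b) t))).

Definition admissible {X Y : Type} (MX : X -> X -> R -> R) (MY : Y -> Y -> R -> R)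
  (star : R -> R -> R) (M : (X + Y) -> (X + Y) -> R -> R) : Prop :=
  fuzzy_metric M star /\ non_archimedean M star /\
  (forall a b t, 0 <= t -> M (inl a) (inl b) t = MX a b t) /\
  (forall a b t, 0 <= t -> M (inr a) (inr b) t = MY a b t).

Definition M_GH {X Y : Type} (MX : X -> X -> R -> R) (MY : Y -> Y -> R -> R)
  (star : R -> R -> R) (t : R) : R :=
  sup_R (fun r => exists M : (X + Y) -> (X + Y) -> R -> R,
                    admissible MX MY star M /\ r = H_sum M t).

(* (t,eps)-net indexed by 0..N-1 *)
Definition is_net {X : Type} (M : X -> X -> R -> R) (t eps : R) (N : nat) (x : nat -> X) : Prop :=
  forall y : X, exists i, (i < N)%nat /\ M y (x i) t > 1 - eps.

Definition Cov {X : Type} (M : X -> X -> R -> R) (eps t : R) : Rbar :=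
  Glb_Rbar (fun r => exists l : list X, NoDup l /\
              (forall y, exists c, In c l /\ ball_f M c eps t y) /\ r = INR (length l)).

Definition diam {X : Type} (M : X -> X -> R -> R) (s : R) : Rbar :=
  Glb_Rbar (fun r => exists x y : X, r = M x y s).

(* Along the scales t_k = 1/(k+1) choose a small error e_k, the uniform nets x^n of
   hypothesis (4) for (t_k, e_k), and, using (TN1), a margin d_k with b * (1 - e_k) <= b - d_k
   for all b >= C(t_k).  The finitely many net distances M_n(x_i^n, x_j^n, t_k) lie in [0, 1],
   so a diagonal argument gives a subsequence along which, from index k on, they differ by less
   than d_k.  The margin then yields M_m(x_i, x_j, t_k) * (1 - e_k) <= M_n(x_i, x_j, t_k), and
   the ratio condition of (4) propagates this compatibility to all scales above t_k.  Compatible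
   nets let X_n and X_m be glued into one non-Archimedean fuzzy metric on X_n + X_m, joining a
   to b through corresponding net points at cost 1 - e_k; there every point is within 1 - e_k
   of the other space, so M_GH(X_n, X_m, t) >= (1 - e_k) * (1 - e_k) for t > t_k, and this
   tends to 1. *)

From Stdlib Require Import Reals List Lra Lia ZArith Classical ClassicalEpsilon.
From Coquelicot Require Import Coquelicot.
Open Scope R_scope.

Lemma in01_0 : in01 0. Proof. unfold in01; lra. Qed.
Lemma in01_1 : in01 1. Proof. unfold in01; lra. Qed.

Create HintDb unit_interval.
#[export] Hint Resolve in01_0 in01_1 : unit_interval.

(* Extends maps on [0, 1] to R, as Stdlib's [IVT] and [continuity_ab_min] require. *)
Definition clamp (x : R) : R := Rmax 0 (Rmin x 1).

Lemma clamp_in01 x : in01 (clamp x).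
Proof. unfold clamp, in01, Rmax, Rmin; repeat destruct Rle_dec; lra. Qed.

Lemma clamp_id x : in01 x -> clamp x = x.
Proof. unfold clamp, in01, Rmax, Rmin; repeat destruct Rle_dec; lra. Qed.

Lemma clamp_lipschitz x y : Rabs (clamp x - clamp y) <= Rabs (x - y).
Proof.
  unfold clamp, Rmax, Rmin; repeat destruct Rle_dec; unfold Rabs;
    repeat destruct Rcase_abs; lra.
Qed.

Lemma continuity_clamp (f : R -> R) :
  (forall c, in01 c -> forall eps, 0 < eps -> exists delta, 0 < delta /\
     forall y, in01 y -> Rabs (c - y) < delta -> Rabs (f c - f y) < eps) ->
  continuity (fun y => f (clamp y)).
Proof.
  intros Hf c eps Heps.
  destruct (Hf (clamp c) (clamp_in01 c) eps Heps) as [delta [Hdelta Hclose]].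
  exists delta; split; [exact Hdelta|].
  intros y [_ Hy]; simpl in *; unfold R_dist in *.
  rewrite Rabs_minus_sym; apply Hclose; [apply clamp_in01|].
  eapply Rle_lt_trans; [apply clamp_lipschitz|]; rewrite Rabs_minus_sym; exact Hy.
Qed.

Lemma continuous_level_set_min (h : R -> R) v y0 : continuity h -> 0 <= y0 -> h y0 = v ->
  exists f, 0 <= f <= y0 /\ h f = v /\ forall y, 0 <= y -> h y = v -> f <= y.
Proof.
  intros Hh Hy0 Hv.
  set (S := fun y => 0 <= y /\ h y = v).
  destruct (Glb_Rbar_correct S) as [Hlower Hgreatest].
  assert (Hbelow : Rbar_le (Finite 0) (Glb_Rbar S)) by (apply Hgreatest; intros y [Hy _]; exact Hy).
  assert (Habove : Rbar_le (Glb_Rbar S) (Finite y0)) by (apply Hlower; split; assumption).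
  destruct (Glb_Rbar S) as [f | |] eqn:Hf; simpl in Hbelow, Habove; try contradiction.
  exists f; split; [lra|]; split.
  - destruct (Req_dec (h f) v) as [|Hne]; [assumption|exfalso].
    assert (Hgap : 0 < Rabs (h f - v)) by (apply Rabs_pos_lt; lra).
    destruct (Hh f _ Hgap) as [delta [Hdelta Hclose]].
    destruct (classic (exists y, S y /\ y < f + delta)) as [[y [[Hy Hhy] Hyf]] | Hnone].
    + assert (Hfy : Rbar_le (Finite f) (Finite y)) by (apply Hlower; split; assumption).
      simpl in Hfy.
      assert (Hd : R_dist (h y) (h f) < Rabs (h f - v)).
      { apply Hclose; split.
        - split; [exact I|]; intros ->; contradiction.
        - simpl; unfold R_dist; rewrite Rabs_right; lra. }
      unfold R_dist in Hd; rewrite Hhy, Rabs_minus_sym in Hd; lra.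
    + assert (Hfd : Rbar_le (Finite (f + delta)) (Finite f)).
      { apply Hgreatest; intros y Sy; simpl.
        apply Rnot_lt_le; intros Hlt; apply Hnone; exists y; split; assumption. }
      simpl in Hfd; lra.
  - intros y Hy Hhy; exact (Hlower y (conj Hy Hhy)).
Qed.

Section TNorm.

Variable star : R -> R -> R.
Hypothesis Hst : cont_tnorm star.

Lemma tnorm_in01 a b : in01 a -> in01 b -> in01 (star a b).
Proof. apply Hst. Qed.

Lemma tnorm_assoc a b c : in01 a -> in01 b -> in01 c -> star a (star b c) = star (star a b) c.
Proof. apply Hst. Qed.

Lemma tnorm_comm a b : in01 a -> in01 b -> star a b = star b a.
Proof. apply Hst. Qed.

Lemma tnorm_1r a : in01 a -> star a 1 = a.
Proof. apply Hst. Qed.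

Lemma tnorm_1l a : in01 a -> star 1 a = a.
Proof. intros Ha; rewrite tnorm_comm by auto with unit_interval; apply tnorm_1r, Ha. Qed.

Lemma tnorm_mono a b c d : in01 a -> in01 b -> in01 c -> in01 d ->
  a <= c -> b <= d -> star a b <= star c d.
Proof. apply Hst. Qed.

Lemma tnorm_continuous a b : in01 a -> in01 b -> forall eps, 0 < eps -> exists delta, 0 < delta /\
  forall a' b', in01 a' -> in01 b' -> Rabs (a - a') < delta -> Rabs (b - b') < delta ->
    Rabs (star a b - star a' b') < eps.
Proof. apply Hst. Qed.

Lemma tnorm_le_l a b : in01 a -> in01 b -> star a b <= a.
Proof.
  intros Ha Hb; rewrite <- (tnorm_1r a Ha) at 2.
  apply tnorm_mono; auto with unit_interval; [lra | apply Hb].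
Qed.

Lemma tnorm_le_r a b : in01 a -> in01 b -> star a b <= b.
Proof. intros Ha Hb; rewrite tnorm_comm by auto; apply tnorm_le_l; auto. Qed.

Lemma tnorm_0r a : in01 a -> star a 0 = 0.
Proof.
  intros Ha; pose proof (tnorm_le_r a 0 Ha in01_0).
  pose proof (proj1 (tnorm_in01 a 0 Ha in01_0)); lra.
Qed.

Lemma tnorm_0l a : in01 a -> star 0 a = 0.
Proof. intros Ha; rewrite tnorm_comm by auto with unit_interval; apply tnorm_0r, Ha. Qed.

Lemma tnorm_left_comm a b c : in01 a -> in01 b -> in01 c ->
  star a (star b c) = star b (star a c).
Proof.
  intros Ha Hb Hc.
  rewrite tnorm_assoc, (tnorm_comm a b), <- tnorm_assoc; auto.
Qed.

Lemma tnorm_regroup_l a b c d e f : in01 a -> in01 b -> in01 c -> in01 d -> in01 e -> in01 f ->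
  star (star (star a b) c) (star (star d e) f) = star (star a (star (star b e) (star c f))) d.
Proof.
  intros Ha Hb Hc Hd He Hf.
  repeat rewrite <- tnorm_assoc by repeat (apply tnorm_in01 || assumption).
  f_equal; f_equal.
  rewrite (tnorm_comm f d), (tnorm_left_comm d e), (tnorm_left_comm c e);
    repeat (apply tnorm_in01 || assumption); reflexivity.
Qed.

Lemma tnorm_regroup_r a b c d e f : in01 a -> in01 b -> in01 c -> in01 d -> in01 e -> in01 f ->
  star (star (star a b) c) (star (star d e) f) = star (star c (star (star b e) (star a d))) f.
Proof.
  intros Ha Hb Hc Hd He Hf.
  rewrite tnorm_regroup_l by assumption.
  repeat rewrite <- tnorm_assoc by repeat (apply tnorm_in01 || assumption).
  rewrite (tnorm_comm f d), (tnorm_left_comm e c), (tnorm_left_comm b c), (tnorm_left_comm a c),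
    (tnorm_left_comm a b), (tnorm_left_comm a e); repeat (apply tnorm_in01 || assumption); reflexivity.
Qed.

Lemma tnorm_continuous_r a : in01 a -> continuity (fun y => star a (clamp y)).
Proof.
  intros Ha; apply (continuity_clamp (star a)); intros c Hc eps Heps.
  destruct (tnorm_continuous a c Ha Hc eps Heps) as [delta [Hdelta Hclose]].
  exists delta; split; [exact Hdelta|]; intros y Hy Hcy.
  apply Hclose; auto; rewrite Rminus_diag, Rabs_R0; exact Hdelta.
Qed.

Lemma tnorm_continuous_l b : in01 b -> continuity (fun y => star (clamp y) b).
Proof.
  intros Hb; apply (continuity_clamp (fun y => star y b)); intros c Hc eps Heps.
  destruct (tnorm_continuous c b Hc Hb eps Heps) as [delta [Hdelta Hclose]].
  exists delta; split; [exact Hdelta|]; intros y Hy Hcy.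
  apply Hclose; auto; rewrite Rminus_diag, Rabs_R0; exact Hdelta.
Qed.

Lemma tnorm_pos_near_1 c r : 0 < c <= 1 -> 0 < r ->
  exists e, 0 < e < 1 /\ e <= r /\ 0 < star c (1 - e).
Proof.
  intros Hc Hr.
  assert (Hc01 : in01 c) by (unfold in01; lra).
  destruct (tnorm_continuous c 1 Hc01 in01_1 c (proj1 Hc)) as [delta [Hdelta Hclose]].
  set (e := Rmin (1 / 2) (Rmin (delta / 2) r)).
  assert (He : 0 < e <= 1 / 2 /\ e <= delta / 2 /\ e <= r).
  { unfold e, Rmin; repeat destruct Rle_dec; lra. }
  exists e; split; [lra|]; split; [lra|].
  assert (Hnear : Rabs (star c 1 - star c (1 - e)) < c).
  { apply Hclose; [assumption | unfold in01; lra | | ].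
    - rewrite Rminus_diag, Rabs_R0; lra.
    - rewrite Rabs_right; lra. }
  rewrite tnorm_1r in Hnear by exact Hc01; apply Rabs_def2 in Hnear; lra.
Qed.

Lemma tnorm_sq_near_1 eps : 0 < eps ->
  exists r, 0 < r /\ forall g, in01 g -> 1 - r < g -> 1 - eps < star g g.
Proof.
  intros Heps.
  destruct (tnorm_continuous 1 1 in01_1 in01_1 eps Heps) as [r [Hr Hclose]].
  exists r; split; [exact Hr|]; intros g Hg Hgr.
  assert (Hnear : Rabs (star 1 1 - star g g) < eps)
    by (apply Hclose; auto; rewrite Rabs_right; destruct Hg; lra).
  rewrite tnorm_1r in Hnear by exact in01_1; apply Rabs_def2 in Hnear; lra.
Qed.

Hypothesis HTN : TN1 star.

(* (TN1) at a = b = e gives e * (1 - e) = 0.  If e > 1 - e, continuity gives e * y = 1 - e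
   for some y, and then 1 - e = e * (e * y) = e * (1 - e) = 0. *)
Lemma tnorm_idempotent_trivial e : 0 < e < 1 -> star e e <> e.
Proof.
  intros He Hidem.
  assert (He01 : in01 e) by (unfold in01; lra).
  assert (Hc01 : in01 (1 - e)) by (unfold in01; lra).
  assert (Hzero : star e (1 - e) = 0).
  { pose proof (HTN e e He01 He01) as H; rewrite Hidem in H.
    pose proof (proj1 (tnorm_in01 e (1 - e) He01 Hc01)); lra. }
  destruct (Rle_or_lt e (1 - e)) as [Hle | Hlt].
  - pose proof (tnorm_mono e e e (1 - e) He01 He01 He01 Hc01 (Rle_refl e) Hle); lra.
  - destruct (IVT (fun y => star e (clamp y) - (1 - e)) 0 1) as [y [_ Hy]].
    + apply continuity_minus; [apply tnorm_continuous_r, He01|].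
      apply continuity_const; intros ? ?; reflexivity.
    + lra.
    + rewrite clamp_id, tnorm_0r by auto with unit_interval; lra.
    + rewrite clamp_id, tnorm_1r by auto with unit_interval; lra.
    + assert (Hy' : star e (clamp y) = 1 - e) by lra.
      assert (Hcollapse : star (star e e) (clamp y) = star e (1 - e))
        by (rewrite <- tnorm_assoc, Hy' by auto using clamp_in01; reflexivity).
      rewrite Hidem, Hy', Hzero in Hcollapse; lra.
Qed.

(* If L * g = L with g < 1, the least y with L * y = L is a nontrivial idempotent. *)
Lemma tnorm_lt_l L g : 0 < L <= 1 -> 0 <= g < 1 -> star L g < L.
Proof.
  intros HL Hg.
  assert (HL01 : in01 L) by (unfold in01; lra).
  assert (Hg01 : in01 g) by (unfold in01; lra).
  destruct (Rle_lt_or_eq _ _ (tnorm_le_l L g HL01 Hg01)) as [Hlt | Heq]; [exact Hlt|exfalso].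
  destruct (continuous_level_set_min (fun y => star L (clamp y)) L g) as [f [Hfg [Hf Hmin]]].
  - apply tnorm_continuous_r, HL01.
  - lra.
  - simpl; rewrite clamp_id; assumption.
  - assert (Hf01 : in01 f) by (unfold in01; lra).
    simpl in Hf, Hmin; rewrite clamp_id in Hf by exact Hf01.
    assert (Hfpos : 0 < f).
    { destruct (Rle_lt_or_eq _ _ (proj1 Hfg)) as [|Hf0]; [assumption|].
      rewrite <- Hf0, tnorm_0r in Hf by exact HL01; lra. }
    assert (Hff01 : in01 (star f f)) by (apply tnorm_in01; assumption).
    apply (tnorm_idempotent_trivial f); [lra|].
    apply Rle_antisym; [apply tnorm_le_l; assumption|].
    apply Hmin; [apply Hff01|].
    rewrite clamp_id, tnorm_assoc, Hf, Hf by assumption; reflexivity.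
Qed.

Lemma tnorm_uniform_gap c g : 0 < c <= 1 -> 0 <= g < 1 ->
  exists d, 0 < d /\ forall b, c <= b <= 1 -> star b g <= b - d.
Proof.
  intros Hc Hg.
  assert (Hg01 : in01 g) by (unfold in01; lra).
  destruct (continuity_ab_min (fun y => y - star (clamp y) g) c 1) as [y [Hy_min Hy]]; [lra| |].
  - intros y _; apply continuity_pt_minus;
      [apply continuity_pt_id | apply (tnorm_continuous_l g Hg01)].
  - exists (y - star (clamp y) g); split.
    + rewrite clamp_id by (unfold in01; lra); pose proof (tnorm_lt_l y g); lra.
    + intros b Hb; specialize (Hy_min b Hb); simpl in Hy_min.
      rewrite (clamp_id b) in Hy_min by (unfold in01; lra); lra.
Qed.

End TNorm.

Lemma sup_R_upper (E : R -> Prop) c x : (forall r, E r -> r <= c) -> E x -> x <= sup_R E.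
Proof.
  intros Hc Ex; unfold sup_R.
  destruct (Lub_Rbar_correct E) as [Hub Hleast].
  assert (Hx := Hub x Ex).
  assert (Hbound : Rbar_le (Lub_Rbar E) (Finite c)) by (apply Hleast; exact Hc).
  destruct (Lub_Rbar E); simpl in *; try contradiction; assumption.
Qed.

(* [sup_R] and [inf_R] read an infinite bound as 0, hence [0 <= c] here and in [inf_R_lower]. *)
Lemma sup_R_least (E : R -> Prop) c : 0 <= c -> (forall r, E r -> r <= c) -> sup_R E <= c.
Proof.
  intros Hc0 Hc; unfold sup_R.
  assert (Hbound : Rbar_le (Lub_Rbar E) (Finite c)) by (apply Lub_Rbar_correct; exact Hc).
  destruct (Lub_Rbar E); simpl in *; assumption.
Qed.

Lemma inf_R_greatest (E : R -> Prop) v x : E x -> (forall r, E r -> v <= r) -> v <= inf_R E.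
Proof.
  intros Ex Hv; unfold inf_R.
  destruct (Glb_Rbar_correct E) as [Hlb Hgreatest].
  assert (Hx := Hlb x Ex).
  assert (Hbound : Rbar_le (Finite v) (Glb_Rbar E)) by (apply Hgreatest; exact Hv).
  destruct (Glb_Rbar E); simpl in *; try contradiction; assumption.
Qed.

Lemma inf_R_lower (E : R -> Prop) c x : 0 <= c -> E x -> x <= c -> inf_R E <= c.
Proof.
  intros Hc Ex Hx; unfold inf_R.
  assert (Hle := proj1 (Glb_Rbar_correct E) x Ex).
  destruct (Glb_Rbar E); simpl in *; try contradiction; lra.
Qed.

Lemma diam_le {X : Type} (M : X -> X -> R -> R) s c x y :
  Rbar_le (Finite c) (diam M s) -> c <= M x y s.
Proof.
  unfold diam; intros Hc.
  assert (Hle := proj1 (Glb_Rbar_correct (fun r => exists x y : X, r = M x y s)) (M x y s)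
                   (ex_intro _ x (ex_intro _ y eq_refl))).
  destruct (Glb_Rbar _); simpl in *; try contradiction; lra.
Qed.

Section FuzzyMetric.

Context {X : Type} (M : X -> X -> R -> R) (star : R -> R -> R).
Hypothesis HM : fuzzy_metric M star.

Lemma fm_in01 x y t : 0 <= t -> in01 (M x y t).
Proof. apply HM. Qed.

Lemma fm_at_0 x y : M x y 0 = 0.
Proof. apply HM. Qed.

Lemma fm_refl x t : 0 < t -> M x x t = 1.
Proof. intros Ht; apply (proj2 (proj1 (proj2 (proj2 HM)) x x)); auto. Qed.

Lemma fm_eq x y : (forall t, 0 < t -> M x y t = 1) -> x = y.
Proof. apply HM. Qed.

Lemma fm_sym x y t : 0 < t -> M x y t = M y x t.
Proof. apply HM. Qed.

Lemma fm_left_continuous x y t : 0 < t -> forall eps, 0 < eps -> exists delta, 0 < delta /\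
  forall u, 0 <= u -> t - delta < u -> u <= t -> Rabs (M x y u - M x y t) < eps.
Proof. apply HM. Qed.

Lemma fm_nondecreasing x y t t' : cont_tnorm star -> 0 <= t -> t <= t' -> M x y t <= M x y t'.
Proof.
  intros Hst Ht Htt'.
  destruct (Req_dec t t') as [<- | Hne]; [lra|].
  destruct (Req_dec t 0) as [-> | Ht0]; [rewrite fm_at_0; apply fm_in01; lra|].
  pose proof (proj1 (proj2 (proj2 (proj2 (proj2 HM)))) x y y t (t' - t)) as Htri.
  replace (t + (t' - t)) with t' in Htri by ring.
  rewrite fm_refl, tnorm_1r in Htri by (auto; try apply fm_in01; lra).
  apply Htri; lra.
Qed.

End FuzzyMetric.

Ltac solve_in01 :=
  solve [repeat match goal with
  | H : cont_tnorm ?st |- in01 (?st _ _) => apply (tnorm_in01 st H)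
  | H : fuzzy_metric ?M _ |- in01 (?M _ _ _) => apply (fm_in01 M _ H); lra
  | |- in01 _ => solve [auto with unit_interval]
  end].

Ltac side_conditions :=
  first [ assumption | solve_in01 | lra
        | match goal with |- 0 <= ?x => apply (@proj1 _ (x <= 1)); change (in01 x); solve_in01 end ].

Lemma H_sum_le_1 {A B : Type} (M : A + B -> A + B -> R -> R) star t :
  fuzzy_metric M star -> inhabited A -> 0 <= t -> H_sum M t <= 1.
Proof.
  intros HM [a] Ht; unfold H_sum.
  eapply Rle_trans; [apply Rmin_l|].
  apply (inf_R_lower _ _ (sup_R (fun u => exists b : B, u = M (inl a) (inr b) t)));
    [lra | exists a; reflexivity |].
  apply sup_R_least; [lra|]; intros r [b ->]; apply (fm_in01 M star HM); assumption.
Qed.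

Lemma Rmax_dist_lt a b c d e :
  Rabs (a - c) < e -> Rabs (b - d) < e -> Rabs (Rmax a b - Rmax c d) < e.
Proof. unfold Rmax; repeat destruct Rle_dec; unfold Rabs; repeat destruct Rcase_abs; lra. Qed.

Section Gluing.

Context {A B : Type} (star : R -> R -> R) (MA : A -> A -> R -> R) (MB : B -> B -> R -> R).
Context (N : nat) (xa : nat -> A) (xb : nat -> B) (t0 g : R).

Hypothesis Hst : cont_tnorm star.
Hypothesis HMA : fuzzy_metric MA star.
Hypothesis HMA_na : non_archimedean MA star.
Hypothesis HMB : fuzzy_metric MB star.
Hypothesis HMB_na : non_archimedean MB star.
Hypothesis Ht0 : 0 < t0.
Hypothesis Hg : in01 g.
Hypothesis compat_A : forall u i j, t0 < u -> (i < N)%nat -> (j < N)%nat ->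
  star (MB (xb i) (xb j) u) g <= MA (xa i) (xa j) u.
Hypothesis compat_B : forall u i j, t0 < u -> (i < N)%nat -> (j < N)%nat ->
  star (MA (xa i) (xa j) u) g <= MB (xb i) (xb j) u.

(* Points a and b are joined through each pair (xa i, xb i) of corresponding net points at
   cost g; the cost is switched on only above t0, so that the cross values vanish up to t0,
   as (KM1) and (KM2) demand. *)
Definition gate (s : R) : R := if Rle_dec s t0 then 0 else g.

Definition bridge (a : A) (b : B) (s : R) (i : nat) : R :=
  star (star (MA a (xa i) s) (gate s)) (MB (xb i) b s).

Fixpoint bridge_max (a : A) (b : B) (s : R) (n : nat) : R :=
  match n with
  | O => 0
  | S k => Rmax (bridge_max a b s k) (bridge a b s k)
  end.

Definition cross (a : A) (b : B) (s : R) : R := bridge_max a b s N.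

Definition glue (p q : A + B) (s : R) : R :=
  match p, q with
  | inl a, inl a' => MA a a' s
  | inr b, inr b' => MB b b' s
  | inl a, inr b => cross a b s
  | inr b, inl a => cross a b s
  end.

Lemma gate_in01 s : in01 (gate s).
Proof. unfold gate; destruct Rle_dec; auto with unit_interval. Qed.

Lemma gate_above s : t0 < s -> gate s = g.
Proof. unfold gate; destruct Rle_dec; [lra | reflexivity]. Qed.

Lemma gate_mono s s' : s <= s' -> gate s <= gate s'.
Proof. destruct Hg; unfold gate; repeat destruct Rle_dec; lra. Qed.

Lemma bridge_in01 a b s i : 0 <= s -> in01 (bridge a b s i).
Proof. intros Hs; unfold bridge; pose proof (gate_in01 s); solve_in01. Qed.

Lemma bridge_max_in01 a b s n : 0 <= s -> in01 (bridge_max a b s n).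
Proof.
  intros Hs; induction n as [|n IH]; simpl; [exact in01_0|].
  unfold Rmax; destruct Rle_dec; [apply bridge_in01, Hs | exact IH].
Qed.

#[local] Hint Resolve gate_in01 : unit_interval.
#[local] Hint Extern 1 (in01 (bridge _ _ _ _)) => apply bridge_in01; lra : unit_interval.
#[local] Hint Extern 1 (in01 (bridge_max _ _ _ _)) => apply bridge_max_in01; lra : unit_interval.
#[local] Hint Extern 1 (in01 (cross _ _ _)) => apply bridge_max_in01; lra : unit_interval.

Lemma gate_below s : s <= t0 -> gate s = 0.
Proof. unfold gate; destruct Rle_dec; [reflexivity | lra]. Qed.

Lemma gate_sq_le t s : star (gate t) (gate s) <= gate (Rmax t s).
Proof.
  pose proof (proj1 (gate_in01 (Rmax t s))).
  destruct (Rle_dec t t0) as [Ht | Ht].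
  - rewrite (gate_below t Ht), (tnorm_0l star) by side_conditions; assumption.
  - destruct (Rle_dec s t0) as [Hs | Hs].
    + rewrite (gate_below s Hs), (tnorm_0r star) by side_conditions; assumption.
    + pose proof (Rmax_l t s).
      rewrite !gate_above by lra; apply (tnorm_le_l star); assumption.
Qed.

Lemma compat_gate_A u i j : 0 <= u -> (i < N)%nat -> (j < N)%nat ->
  star (gate u) (MB (xb i) (xb j) u) <= MA (xa i) (xa j) u.
Proof.
  intros Hu Hi Hj; destruct (Rle_dec u t0) as [Hle | Hgt].
  - rewrite gate_below, (tnorm_0l star) by side_conditions.
    exact (proj1 (fm_in01 MA star HMA _ _ _ Hu)).
  - rewrite gate_above, (tnorm_comm star) by side_conditions; apply compat_A; auto; lra.
Qed.

Lemma compat_gate_B u i j : 0 <= u -> (i < N)%nat -> (j < N)%nat ->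
  star (gate u) (MA (xa i) (xa j) u) <= MB (xb i) (xb j) u.
Proof.
  intros Hu Hi Hj; destruct (Rle_dec u t0) as [Hle | Hgt].
  - rewrite gate_below, (tnorm_0l star) by side_conditions.
    exact (proj1 (fm_in01 MB star HMB _ _ _ Hu)).
  - rewrite gate_above, (tnorm_comm star) by side_conditions; apply compat_B; auto; lra.
Qed.

Lemma bridge_le_max a b s n i : (i < n)%nat -> bridge a b s i <= bridge_max a b s n.
Proof.
  induction n as [|n IH]; intros Hi; [lia|]; simpl.
  destruct (Nat.eq_dec i n) as [-> | Hne]; [apply Rmax_r|].
  eapply Rle_trans; [apply IH; lia | apply Rmax_l].
Qed.

Lemma star_bridge_max_le_r a b s n w v : 0 <= s -> in01 w -> 0 <= v ->
  (forall i, (i < n)%nat -> star (bridge a b s i) w <= v) -> star (bridge_max a b s n) w <= v.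
Proof.
  intros Hs Hw Hv Hbridges; induction n as [|n IH]; simpl.
  - rewrite (tnorm_0l star) by side_conditions; exact Hv.
  - unfold Rmax; destruct Rle_dec; [apply Hbridges; lia | apply IH; auto].
Qed.

Lemma star_bridge_max_le_l a b s n w v : 0 <= s -> in01 w -> 0 <= v ->
  (forall i, (i < n)%nat -> star w (bridge a b s i) <= v) -> star w (bridge_max a b s n) <= v.
Proof.
  intros Hs Hw Hv Hbridges; rewrite (tnorm_comm star) by side_conditions.
  apply star_bridge_max_le_r; auto; intros i Hi; rewrite (tnorm_comm star) by side_conditions; auto.
Qed.

Lemma bridge_max_below a b s n : 0 <= s <= t0 -> bridge_max a b s n = 0.
Proof.
  intros Hs; induction n as [|n IH]; simpl; [reflexivity|].
  unfold bridge; rewrite IH, gate_below, (tnorm_0r star), (tnorm_0l star) by side_conditions.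
  apply Rmax_left; lra.
Qed.

Lemma bridge_max_mono a b s s' n : 0 <= s -> s <= s' -> bridge_max a b s n <= bridge_max a b s' n.
Proof.
  intros Hs Hss'; induction n as [|n IH]; simpl; [lra|].
  apply Rmax_lub; [eapply Rle_trans; [exact IH | apply Rmax_l] |].
  eapply Rle_trans; [|apply Rmax_r]; unfold bridge.
  apply (tnorm_mono star); try side_conditions; [apply (tnorm_mono star); try side_conditions;
    [|apply gate_mono, Hss'] |]; eapply fm_nondecreasing; eauto.
Qed.

Lemma bridge_left_continuous a b t i : t0 < t -> forall eps, 0 < eps -> exists delta, 0 < delta /\
  forall u, 0 <= u -> t - delta < u -> u <= t -> Rabs (bridge a b u i - bridge a b t i) < eps.
Proof.
  intros Ht eps Heps.
  set (P := MA a (xa i) t); set (Q := MB (xb i) b t).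
  assert (HP : in01 P) by (unfold P; solve_in01).
  assert (HQ : in01 Q) by (unfold Q; solve_in01).
  destruct (tnorm_continuous star Hst (star P g) Q ltac:(solve_in01) HQ eps Heps) as [d1 [Hd1 Hc1]].
  destruct (tnorm_continuous star Hst P g HP Hg d1 Hd1) as [d2 [Hd2 Hc2]].
  destruct (fm_left_continuous MA star HMA a (xa i) t ltac:(lra) d2 Hd2) as [dA [HdA HlA]].
  destruct (fm_left_continuous MB star HMB (xb i) b t ltac:(lra) d1 Hd1) as [dB [HdB HlB]].
  exists (Rmin dA (Rmin dB (t - t0))); split; [repeat apply Rmin_pos; lra|].
  intros u Hu0 Hu Hut.
  assert (Hmin : Rmin dA (Rmin dB (t - t0)) <= dA /\ Rmin dA (Rmin dB (t - t0)) <= dB /\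
                 Rmin dA (Rmin dB (t - t0)) <= t - t0) by (unfold Rmin; repeat destruct Rle_dec; lra).
  unfold bridge; rewrite !gate_above by lra; fold P Q; rewrite Rabs_minus_sym.
  apply Hc1; [solve_in01 | solve_in01 | |].
  - apply Hc2; [solve_in01 | exact Hg | | rewrite Rminus_diag, Rabs_R0; exact Hd2].
    rewrite Rabs_minus_sym; apply HlA; lra.
  - rewrite Rabs_minus_sym; apply HlB; lra.
Qed.

Lemma bridge_max_left_continuous a b t n : 0 < t -> forall eps, 0 < eps -> exists delta, 0 < delta /\
  forall u, 0 <= u -> t - delta < u -> u <= t -> Rabs (bridge_max a b u n - bridge_max a b t n) < eps.
Proof.
  intros Ht eps Heps; destruct (Rle_dec t t0) as [Hle | Hgt].
  - exists 1; split; [lra|]; intros u Hu0 Hu Hut.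
    rewrite !bridge_max_below, Rminus_diag, Rabs_R0 by lra; exact Heps.
  - induction n as [|n [d1 [Hd1 Hc1]]].
    + exists 1; split; [lra|]; intros; simpl; rewrite Rminus_diag, Rabs_R0; exact Heps.
    + destruct (bridge_left_continuous a b t n ltac:(lra) eps Heps) as [d2 [Hd2 Hc2]].
      exists (Rmin d1 d2); split; [apply Rmin_pos; assumption|]; intros u Hu0 Hu Hut.
      pose proof (Rmin_l d1 d2); pose proof (Rmin_r d1 d2).
      apply Rmax_dist_lt; [apply Hc1 | apply Hc2]; lra.
Qed.

Lemma cross_triangle_AAB a a' b t s : 0 < t -> 0 < s ->
  star (MA a a' t) (cross a' b s) <= cross a b (Rmax t s).
Proof.
  intros Ht Hs; pose proof (Rmax_l t s); pose proof (Rmax_r t s).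
  unfold cross; apply star_bridge_max_le_l; try side_conditions; intros i Hi.
  eapply Rle_trans; [|apply (bridge_le_max _ _ _ _ i Hi)]; unfold bridge.
  rewrite !(tnorm_assoc star) by side_conditions.
  apply (tnorm_mono star); try side_conditions.
  - apply (tnorm_mono star); try side_conditions;
      [apply HMA_na; assumption | apply gate_mono; assumption].
  - eapply fm_nondecreasing; eauto; lra.
Qed.

Lemma cross_triangle_ABB a b b' t s : 0 < t -> 0 < s ->
  star (cross a b t) (MB b b' s) <= cross a b' (Rmax t s).
Proof.
  intros Ht Hs; pose proof (Rmax_l t s); pose proof (Rmax_r t s).
  unfold cross; apply star_bridge_max_le_r; try side_conditions; intros i Hi.
  eapply Rle_trans; [|apply (bridge_le_max _ _ _ _ i Hi)]; unfold bridge.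
  rewrite <- (tnorm_assoc star Hst (star (MA a (xa i) t) (gate t))) by side_conditions.
  apply (tnorm_mono star); try side_conditions.
  - apply (tnorm_mono star); try side_conditions;
      [eapply fm_nondecreasing; eauto; lra | apply gate_mono; assumption].
  - apply HMB_na; assumption.
Qed.

Lemma cross_triangle_ABA a b a' t s : 0 < t -> 0 < s ->
  star (cross a b t) (cross a' b s) <= MA a a' (Rmax t s).
Proof.
  intros Ht Hs; pose proof (Rmax_l t s); pose proof (Rmax_r t s); set (u := Rmax t s) in *.
  unfold cross; apply star_bridge_max_le_r; try side_conditions; intros i Hi.
  apply star_bridge_max_le_l; try side_conditions; intros j Hj; unfold bridge.
  rewrite (tnorm_regroup_l star) by side_conditions.
  assert (HQ : star (MB (xb i) b t) (MB (xb j) b s) <= MB (xb i) (xb j) u)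
    by (rewrite (fm_sym MB star HMB (xb j)) by lra; apply HMB_na; assumption).
  assert (Hmid : star (star (gate t) (gate s)) (star (MB (xb i) b t) (MB (xb j) b s))
                 <= MA (xa i) (xa j) u).
  { apply Rle_trans with (star (gate u) (MB (xb i) (xb j) u)); [|apply compat_gate_A; auto; lra].
    apply (tnorm_mono star); try side_conditions; apply gate_sq_le. }
  assert (Hleft : star (MA a (xa i) t) (MA (xa i) (xa j) u) <= MA a (xa j) u)
    by (rewrite <- (Rmax_right t u) at 2 by lra; apply HMA_na; lra).
  apply Rle_trans with (star (MA a (xa j) u) (MA a' (xa j) s)).
  - apply (tnorm_mono star); try side_conditions.
    eapply Rle_trans; [|exact Hleft]; apply (tnorm_mono star); try side_conditions.
  - rewrite (fm_sym MA star HMA a') by lra; rewrite <- (Rmax_left u s) at 2 by lra.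
    apply HMA_na; lra.
Qed.

Lemma cross_triangle_BAB a b b' t s : 0 < t -> 0 < s ->
  star (cross a b t) (cross a b' s) <= MB b b' (Rmax t s).
Proof.
  intros Ht Hs; pose proof (Rmax_l t s); pose proof (Rmax_r t s); set (u := Rmax t s) in *.
  unfold cross; apply star_bridge_max_le_r; try side_conditions; intros i Hi.
  apply star_bridge_max_le_l; try side_conditions; intros j Hj; unfold bridge.
  rewrite (tnorm_regroup_r star) by side_conditions.
  assert (HP : star (MA a (xa i) t) (MA a (xa j) s) <= MA (xa i) (xa j) u)
    by (rewrite (fm_sym MA star HMA a) by lra; apply HMA_na; assumption).
  assert (Hmid : star (star (gate t) (gate s)) (star (MA a (xa i) t) (MA a (xa j) s))
                 <= MB (xb i) (xb j) u).
  { apply Rle_trans with (star (gate u) (MA (xa i) (xa j) u)); [|apply compat_gate_B; auto; lra].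
    apply (tnorm_mono star); try side_conditions; apply gate_sq_le. }
  assert (Hleft : star (MB (xb i) b t) (MB (xb i) (xb j) u) <= MB b (xb j) u).
  { rewrite (fm_sym MB star HMB (xb i) b) by lra.
    rewrite <- (Rmax_right t u) at 2 by lra; apply HMB_na; lra. }
  apply Rle_trans with (star (MB b (xb j) u) (MB (xb j) b' s)).
  - apply (tnorm_mono star); try side_conditions.
    eapply Rle_trans; [|exact Hleft]; apply (tnorm_mono star); try side_conditions.
  - rewrite <- (Rmax_left u s) at 2 by lra; apply HMB_na; lra.
Qed.

Lemma glue_non_archimedean : non_archimedean glue star.
Proof.
  intros [a|b] [a'|b'] [a''|b''] t s Ht Hs; simpl.
  - apply HMA_na; assumption.
  - apply cross_triangle_AAB; assumption.
  - apply cross_triangle_ABA; assumption.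
  - apply cross_triangle_ABB; assumption.
  - rewrite (tnorm_comm star), (fm_sym MA star HMA a'), Rmax_comm by side_conditions.
    apply cross_triangle_AAB; assumption.
  - apply cross_triangle_BAB; assumption.
  - rewrite (tnorm_comm star), (fm_sym MB star HMB b), Rmax_comm by side_conditions.
    apply cross_triangle_ABB; assumption.
  - apply HMB_na; assumption.
Qed.

Lemma glue_in01 p q t : 0 <= t -> in01 (glue p q t).
Proof. intros Ht; destruct p, q; simpl; solve_in01. Qed.

Lemma glue_nondecreasing p q t t' : 0 <= t -> t <= t' -> glue p q t <= glue p q t'.
Proof.
  intros Ht Htt'; destruct p, q; simpl;
    solve [eapply fm_nondecreasing; eauto | apply bridge_max_mono; assumption].
Qed.

Lemma glue_fuzzy_metric : fuzzy_metric glue star.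
Proof.
  split; [exact glue_in01|]; split; [|split; [|split; [|split]]].
  - intros [a|b] [a'|b']; simpl;
      solve [apply (fm_at_0 _ star); assumption | apply bridge_max_below; lra].
  - intros [a|b] [a'|b']; split; simpl.
    + intros H1; f_equal; apply (fm_eq MA star HMA); exact H1.
    + intros E; injection E as ->; apply (fm_refl MA star HMA).
    + intros H1; specialize (H1 t0 Ht0); unfold cross in H1; rewrite bridge_max_below in H1; lra.
    + discriminate.
    + intros H1; specialize (H1 t0 Ht0); unfold cross in H1; rewrite bridge_max_below in H1; lra.
    + discriminate.
    + intros H1; f_equal; apply (fm_eq MB star HMB); exact H1.
    + intros E; injection E as ->; apply (fm_refl MB star HMB).
  - intros [a|b] [a'|b'] t Ht; simpl;
      solve [reflexivity | apply (fm_sym _ star); assumption].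
  - intros p q r t s Ht Hs; eapply Rle_trans; [apply glue_non_archimedean; assumption|].
    apply glue_nondecreasing; [apply Rlt_le, (Rlt_le_trans _ t); [exact Ht | apply Rmax_l]|].
    unfold Rmax; destruct Rle_dec; lra.
  - intros [a|b] [a'|b'] t Ht; simpl;
      solve [apply (fm_left_continuous _ star); assumption
            | apply bridge_max_left_continuous; assumption].
Qed.

Lemma glue_admissible : admissible MA MB star glue.
Proof.
  split; [exact glue_fuzzy_metric|]; split; [exact glue_non_archimedean|].
  split; intros; reflexivity.
Qed.

Lemma cross_ge_of_near_A a b i t : t0 < t -> (i < N)%nat -> g <= MA a (xa i) t0 -> b = xb i ->
  star g g <= cross a b t.
Proof.
  intros Ht Hi Hnear ->; eapply Rle_trans; [|apply (bridge_le_max _ _ _ _ i Hi)]; unfold bridge.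
  rewrite gate_above, (fm_refl MB star HMB), (tnorm_1r star) by side_conditions.
  apply (tnorm_mono star); try side_conditions.
  eapply Rle_trans; [exact Hnear | eapply fm_nondecreasing; eauto; lra].
Qed.

Lemma cross_ge_of_near_B a b i t : t0 < t -> (i < N)%nat -> g <= MB b (xb i) t0 -> a = xa i ->
  star g g <= cross a b t.
Proof.
  intros Ht Hi Hnear ->; eapply Rle_trans; [|apply (bridge_le_max _ _ _ _ i Hi)]; unfold bridge.
  rewrite gate_above, (fm_refl MA star HMA), (tnorm_1l star), (fm_sym MB star HMB (xb i))
    by side_conditions.
  apply (tnorm_mono star); try side_conditions.
  eapply Rle_trans; [exact Hnear | eapply fm_nondecreasing; eauto; lra].
Qed.

Lemma H_sum_glue_ge t : t0 < t -> inhabited A -> inhabited B ->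
  (forall a, exists i, (i < N)%nat /\ g <= MA a (xa i) t0) ->
  (forall b, exists i, (i < N)%nat /\ g <= MB b (xb i) t0) ->
  star g g <= H_sum glue t.
Proof.
  intros Ht [a0] [b0] Hnet_A Hnet_B; unfold H_sum; apply Rmin_glb.
  - eapply inf_R_greatest; [exists a0; reflexivity|]; intros r [a ->].
    destruct (Hnet_A a) as [i [Hi Hnear]].
    apply Rle_trans with (cross a (xb i) t); [eapply cross_ge_of_near_A; eauto|].
    apply (sup_R_upper _ 1); [|exists (xb i); reflexivity].
    intros r [b ->]; apply glue_in01; lra.
  - eapply inf_R_greatest; [exists b0; reflexivity|]; intros r [b ->].
    destruct (Hnet_B b) as [i [Hi Hnear]].
    apply Rle_trans with (cross (xa i) b t); [eapply cross_ge_of_near_B; eauto|].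
    apply (sup_R_upper _ 1); [|exists (xa i); reflexivity].
    intros r [a ->]; apply glue_in01; lra.
Qed.

Lemma M_GH_ge_of_compatible_nets t : t0 < t -> inhabited A -> inhabited B ->
  (forall a, exists i, (i < N)%nat /\ g <= MA a (xa i) t0) ->
  (forall b, exists i, (i < N)%nat /\ g <= MB b (xb i) t0) ->
  star g g <= M_GH MA MB star t.
Proof.
  intros Ht HA HB Hnet_A Hnet_B; unfold M_GH.
  apply Rle_trans with (H_sum glue t); [apply H_sum_glue_ge; assumption|].
  apply (sup_R_upper _ 1).
  - intros r [M' [[HM' _] ->]]; apply (H_sum_le_1 M' star); auto; lra.
  - exists glue; split; [exact glue_admissible | reflexivity].
Qed.

End Gluing.

Definition infinite_nat (P : nat -> Prop) : Prop := forall n, exists m, (n <= m)%nat /\ P m.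

Lemma infinite_pigeonhole K (f : nat -> nat) P : infinite_nat P -> (forall n, P n -> (f n <= K)%nat) ->
  exists b, infinite_nat (fun n => P n /\ f n = b).
Proof.
  revert P; induction K as [|K IH]; intros P HP Hf.
  - exists 0%nat; intros n; destruct (HP n) as [m [Hm Pm]].
    exists m; specialize (Hf m Pm); repeat split; auto; lia.
  - destruct (classic (infinite_nat (fun n => P n /\ f n = S K))) as [Htop | Htop]; [eauto|].
    destruct (not_all_ex_not _ _ Htop) as [n0 Hn0].
    destruct (IH (fun n => P n /\ f n <> S K)) as [b Hb].
    + intros n; destruct (HP (Nat.max n n0)) as [m [Hm Pm]].
      exists m; split; [lia|]; split; [exact Pm|].
      intros Hfm; apply Hn0; exists m; split; [lia | split; assumption].
    + intros n [Pn Hne]; specialize (Hf n Pn); lia.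
    + exists b; intros n; destruct (Hb n) as [m [Hm [[Pm _] Hfm]]]; eauto.
Qed.

Lemma up_le x y : x <= y -> (up x <= up y)%Z.
Proof.
  intros Hxy; destruct (archimed x), (archimed y).
  apply Zlt_succ_le, lt_IZR; rewrite succ_IZR; lra.
Qed.

Lemma up_eq_dist_lt x y : up x = up y -> Rabs (x - y) < 1.
Proof.
  intros Hup; destruct (archimed x), (archimed y); rewrite Hup in *.
  apply Rabs_def1; lra.
Qed.

Lemma infinite_refine_close (a : nat -> R) P h : 0 < h -> infinite_nat P -> (forall n, in01 (a n)) ->
  exists Q, infinite_nat Q /\ (forall n, Q n -> P n) /\
    (forall n m, Q n -> Q m -> Rabs (a n - a m) < h).
Proof.
  intros Hh HP Ha.
  assert (Hup_pos : forall n, (0 <= up (a n / h))%Z).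
  { intros n; apply le_IZR; destruct (archimed (a n / h)).
    assert (0 <= a n / h) by (apply Rdiv_le_0_compat; [apply Ha | lra]); lra. }
  destruct (infinite_pigeonhole (Z.to_nat (up (1 / h))) (fun n => Z.to_nat (up (a n / h))) P HP)
    as [b Hb].
  - intros n _; apply Z2Nat.inj_le; [apply Hup_pos | apply (Z.le_trans _ _ _ (Hup_pos n)) |];
      apply up_le, Rmult_le_compat_r; try apply Ha; left; apply Rinv_0_lt_compat, Hh.
  - exists (fun n => P n /\ Z.to_nat (up (a n / h)) = b); split; [exact Hb|].
    split; [intros n []; assumption|].
    intros n m [_ Hn] [_ Hm]; rewrite <- Hm in Hn; apply Z2Nat.inj in Hn; try apply Hup_pos.
    replace (a n - a m) with (h * (a n / h - a m / h)) by (field; lra).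
    rewrite Rabs_mult, Rabs_right by lra.
    apply Rlt_le_trans with (h * 1); [|lra].
    apply Rmult_lt_compat_l; [exact Hh | apply up_eq_dist_lt, Hn].
Qed.

Lemma infinite_refine_close_all {I : Type} (l : list I) (a : I -> nat -> R) P h :
  0 < h -> infinite_nat P -> (forall p n, in01 (a p n)) ->
  exists Q, infinite_nat Q /\ (forall n, Q n -> P n) /\
    (forall p, In p l -> forall n m, Q n -> Q m -> Rabs (a p n - a p m) < h).
Proof.
  intros Hh; revert P; induction l as [|p l IH]; intros P HP Ha.
  - exists P; repeat split; auto; intros p [].
  - destruct (IH P HP Ha) as [Q1 [HQ1 [HQ1P HQ1close]]].
    destruct (infinite_refine_close (a p) Q1 h Hh HQ1 (Ha p)) as [Q2 [HQ2 [HQ2Q1 HQ2close]]].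
    exists Q2; repeat split; auto; intros q [<- | Hq] n m Qn Qm; auto.
Qed.

Lemma diagonal_subsequence (Rel : nat -> nat -> nat -> Prop) :
  (forall k P, infinite_nat P -> exists Q, infinite_nat Q /\ (forall n, Q n -> P n) /\
     (forall n m, Q n -> Q m -> Rel k n m)) ->
  exists phi : nat -> nat, (forall k, (phi k < phi (S k))%nat) /\
    (forall k n m, (k <= n)%nat -> (k <= m)%nat -> Rel k (phi n) (phi m)).
Proof.
  intros Hrefine.
  destruct (choice (fun (kP : nat * (nat -> Prop)) Q => infinite_nat (snd kP) ->
      infinite_nat Q /\ (forall n, Q n -> snd kP n) /\ (forall n m, Q n -> Q m -> Rel (fst kP) n m)))
    as [refine Hrefined].
  { intros [k P]; destruct (classic (infinite_nat P)) as [HP | HP].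
    - destruct (Hrefine k P HP) as [Q HQ]; exists Q; auto.
    - exists P; simpl; tauto. }
  set (stage := fix stage k := match k with O => fun _ => True | S k' => refine (k', stage k') end).
  assert (Hstage : forall k, infinite_nat (stage k)).
  { induction k as [|k IH]; [intros n; exists n; split; [lia | exact I]|].
    apply (Hrefined (k, stage k) IH). }
  assert (Hnested : forall k j, (k <= j)%nat -> forall n, stage j n -> stage k n).
  { intros k j Hkj; induction Hkj as [|j Hkj IH]; auto.
    intros n Hn; apply IH, (Hrefined (j, stage j) (Hstage j)), Hn. }
  destruct (choice (fun (km : nat * nat) n => (snd km < n)%nat /\ stage (S (fst km)) n))
    as [next Hnext].
  { intros [k m]; destruct (Hstage (S k) (S m)) as [n [Hn Hs]].
    exists n; simpl; split; [lia | exact Hs]. }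
  set (phi := fix phi k := match k with O => next (0, 0)%nat | S k' => next (k, phi k') end).
  assert (Hphi : forall k, stage (S k) (phi k)).
  { intros [|k]; [exact (proj2 (Hnext (0, 0)%nat)) | exact (proj2 (Hnext (S k, phi k)))]. }
  exists phi; split; [intros k; exact (proj1 (Hnext (S k, phi k)))|].
  intros k n m Hkn Hkm.
  apply (Hrefined (k, stage k) (Hstage k));
    [apply (Hnested (S k) (S n)) | apply (Hnested (S k) (S m))]; solve [lia | apply Hphi].
Qed.

(* The ratio condition of (4) carries compatibility from scale t ([b0 * g <= a0]) to every
   larger scale u: if au < bu, then au / (bu * g) >= a0 / (b0 * g) >= 1. *)
Lemma tnorm_compat_of_ratio star a0 b0 au bu g : cont_tnorm star ->
  in01 b0 -> in01 au -> in01 bu -> in01 g -> b0 <= bu -> 0 < star b0 g -> star b0 g <= a0 ->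
  (au < bu -> au / star bu g >= a0 / star b0 g) -> star bu g <= au.
Proof.
  intros Hst Hb0 Hau Hbu Hg Hb0bu Hpos Ha0 Hratio.
  destruct (Rle_or_lt bu au) as [Hle | Hlt].
  - eapply Rle_trans; [apply (tnorm_le_l star) | ]; assumption.
  - specialize (Hratio Hlt).
    assert (Hmono : star b0 g <= star bu g) by (apply (tnorm_mono star); auto; lra).
    set (s0 := star b0 g) in *; set (su := star bu g) in *.
    assert (Hone : 1 <= a0 / s0).
    { apply (Rmult_le_reg_r s0); [exact Hpos|].
      unfold Rdiv; rewrite Rmult_assoc, Rinv_l, Rmult_1_l, Rmult_1_r by lra; exact Ha0. }
    apply (Rmult_le_reg_r (/ su)); [apply Rinv_0_lt_compat; lra|].
    rewrite Rinv_r by lra; unfold Rdiv in *; lra.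
Qed.

Section NetFamilies.

Context {X : nat -> Type} (M : forall n, X n -> X n -> R -> R).

Definition ratio_condition star N t e (x : forall n, nat -> X n) : Prop :=
  forall n m s i j, t < s -> (i < N)%nat -> (j < N)%nat ->
    M n (x n i) (x n j) s < M m (x m i) (x m j) s ->
    M n (x n i) (x n j) s / star (M m (x m i) (x m j) s) (1 - e)
    >= M n (x n i) (x n j) t / star (M m (x m i) (x m j) t) (1 - e).

Definition nets_close N t (x : forall n, nat -> X n) d n m : Prop :=
  forall i j, (i < N)%nat -> (j < N)%nat -> Rabs (M n (x n i) (x n j) t - M m (x m i) (x m j) t) < d.

Lemma infinite_refine_nets_close N t x d P : 0 < d -> infinite_nat P ->
  (forall n a b, in01 (M n a b t)) ->
  exists Q, infinite_nat Q /\ (forall n, Q n -> P n) /\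
    (forall n m, Q n -> Q m -> nets_close N t x d n m).
Proof.
  intros Hd HP Hin.
  destruct (infinite_refine_close_all (list_prod (seq 0 N) (seq 0 N))
              (fun ij n => M n (x n (fst ij)) (x n (snd ij)) t) P d Hd HP) as [Q [HQ [HQP Hclose]]].
  - intros; apply Hin.
  - exists Q; repeat split; auto; intros n m Qn Qm i j Hi Hj.
    apply (Hclose (i, j)); auto; apply in_prod; apply in_seq; lia.
Qed.

Variables (star : R -> R -> R) (N : nat) (t e c d : R) (x : forall n, nat -> X n).

Hypothesis Hst : cont_tnorm star.
Hypothesis HM : forall k, fuzzy_metric (M k) star.
Hypothesis HM_na : forall k, non_archimedean (M k) star.
Hypothesis Ht : 0 < t.
Hypothesis He : 0 < e < 1.
Hypothesis Hc : in01 c.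
Hypothesis Hc_diam : forall k a b, c <= M k a b t.
Hypothesis Hc_pos : 0 < star c (1 - e).
Hypothesis Hgap : forall b, c <= b <= 1 -> star b (1 - e) <= b - d.
Hypothesis Hnets : forall k, is_net (M k) t e N (x k).
Hypothesis Hratio : ratio_condition star N t e x.

Lemma compat_of_nets_close n m u i j : nets_close N t x d n m -> t < u ->
  (i < N)%nat -> (j < N)%nat -> star (M m (x m i) (x m j) u) (1 - e) <= M n (x n i) (x n j) u.
Proof.
  intros Hclose Hu Hi Hj.
  assert (Hg : in01 (1 - e)) by (unfold in01; lra).
  pose proof (HM n) as HMn; pose proof (HM m) as HMm.
  assert (Hb0 : in01 (M m (x m i) (x m j) t)) by solve_in01.
  assert (Hb0c := Hc_diam m (x m i) (x m j)).
  apply (tnorm_compat_of_ratio star (M n (x n i) (x n j) t) (M m (x m i) (x m j) t));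
    try assumption; try solve_in01.
  - eapply fm_nondecreasing; eauto; lra.
  - eapply Rlt_le_trans; [exact Hc_pos | apply (tnorm_mono star); solve [assumption | lra]].
  - specialize (Hclose i j Hi Hj); apply Rabs_def2 in Hclose.
    specialize (Hgap _ (conj Hb0c (proj2 Hb0))); lra.
  - intros Hlt; apply Hratio; assumption.
Qed.

Lemma M_GH_ge_of_nets_close n m t' : inhabited (X n) -> inhabited (X m) ->
  nets_close N t x d n m -> t < t' -> star (1 - e) (1 - e) <= M_GH (M n) (M m) star t'.
Proof.
  intros Hn Hm Hclose Ht'.
  assert (Hclose' : nets_close N t x d m n)
    by (intros i j Hi Hj; rewrite Rabs_minus_sym; apply Hclose; assumption).
  apply (M_GH_ge_of_compatible_nets star (M n) (M m) N (x n) (x m) t);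
    try solve [auto | unfold in01; lra].
  - intros u i j Hu Hi Hj; apply compat_of_nets_close; assumption.
  - intros u i j Hu Hi Hj; apply compat_of_nets_close; assumption.
  - intros a; destruct (Hnets n a) as [i [Hi Ha]]; exists i; split; [exact Hi | lra].
  - intros b; destruct (Hnets m b) as [i [Hi Hb]]; exists i; split; [exact Hi | lra].
Qed.

End NetFamilies.

Lemma inv_succ_lt s : 0 < s -> exists k : nat, / INR (S k) < s.
Proof.
  intros Hs; destruct (archimed_cor1 s Hs) as [K [HK HK0]].
  exists (pred K); rewrite Nat.succ_pred_pos by exact HK0; exact HK.
Qed.

Theorem mainTheorem7
  (star : R -> R -> R) (X : nat -> Type) (M : forall n, X n -> X n -> R -> R) :
  cont_tnorm star ->
  (forall n, inhabited (X n)) ->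
  (forall n, fuzzy_metric (M n) star) ->
  (forall n, non_archimedean (M n) star) ->
  (forall n, fcompact_space (M n)) ->
  (* (1) *)
  TN1 star ->
  (* (2) *)
  (exists C : R -> R,
      (forall s, 0 < s -> 0 < C s <= 1) /\
      (forall s s', 0 < s -> s <= s' -> C s <= C s') /\
      (forall s, 0 < s -> forall eps, 0 < eps -> exists delta, 0 < delta /\
          forall u, 0 < u -> s - delta < u -> u <= s -> Rabs (C u - C s) < eps) /\
      (forall s n, 0 < s -> Rbar_le (Finite (C s)) (diam (M n) s))) ->
  (* (3) and (4) *)
  (exists Nf : R -> R -> nat,
      (forall t eps, 0 < t -> 0 < eps < 1 ->
         forall n, Rbar_le (Cov (M n) eps t) (Finite (INR (Nf eps t)))) /\
      (forall t eps, 0 < t -> 0 < eps < 1 ->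
         exists x : forall n, nat -> X n,
           (forall n, is_net (M n) t eps (Nf eps t) (x n)) /\
           (forall n m s i j, t < s -> (i < Nf eps t)%nat -> (j < Nf eps t)%nat ->
              M n (x n i) (x n j) s < M m (x m i) (x m j) s ->
              M n (x n i) (x n j) s / star (M m (x m i) (x m j) s) (1 - eps)
              >= M n (x n i) (x n j) t / star (M m (x m i) (x m j) t) (1 - eps)))) ->
  exists phi : nat -> nat,
    (forall k, (phi k < phi (S k))%nat) /\
    (forall t eps, 0 < t -> 0 < eps < 1 ->
       exists n0 : nat, forall n m, (n0 <= n)%nat -> (n0 <= m)%nat ->
         M_GH (M (phi n)) (M (phi m)) star t > 1 - eps).
Proof.
  intros Hst Hinh Hfm Hna _ HTN [C [HC [_ [_ HCdiam]]]] [Nf [_ Hnets]].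
  set (tk := fun k : nat => / INR (S k)).
  assert (Htk : forall k, 0 < tk k) by (intros k; apply Rinv_0_lt_compat, lt_0_INR; lia).
  destruct (choice (fun k e => 0 < e < 1 /\ e <= tk k /\ 0 < star (C (tk k)) (1 - e))) as [e He].
  { intros k; apply tnorm_pos_near_1; auto. }
  destruct (choice (fun k x => (forall n, is_net (M n) (tk k) (e k) (Nf (e k) (tk k)) (x n)) /\
                               ratio_condition M star (Nf (e k) (tk k)) (tk k) (e k) x)) as [x Hx].
  { intros k; apply Hnets; [apply Htk | apply He]. }
  destruct (choice (fun k d => 0 < d /\ forall b, C (tk k) <= b <= 1 -> star b (1 - e k) <= b - d))
    as [d Hd].
  { intros k; apply tnorm_uniform_gap; auto; destruct (He k); lra. }
  destruct (diagonal_subsequence (fun k => nets_close M (Nf (e k) (tk k)) (tk k) (x k) (d k)))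
    as [phi [Hphi Hclose]].
  { intros k P HP; apply infinite_refine_nets_close; [apply Hd | exact HP |].
    intros n a b; apply (fm_in01 _ star (Hfm n)), Rlt_le, Htk. }
  exists phi; split; [exact Hphi|]; intros t eps Ht Heps.
  destruct (tnorm_sq_near_1 star Hst eps (proj1 Heps)) as [r [Hr Hsq]].
  destruct (inv_succ_lt (Rmin t r) (Rmin_pos _ _ Ht Hr)) as [k Htk_small]; fold (tk k) in Htk_small.
  pose proof (Rmin_l t r); pose proof (Rmin_r t r); destruct (He k) as [Hek [Hek_small Hek_pos]].
  exists k; intros n m Hn Hm.
  apply Rlt_le_trans with (star (1 - e k) (1 - e k)); [apply Hsq; [unfold in01 |]; lra|].
  apply (M_GH_ge_of_nets_close M star (Nf (e k) (tk k)) (tk k) (e k) (C (tk k)) (d k) (x k));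
    auto; try lra.
  - split; [apply Rlt_le|]; apply HC, Htk.
  - intros j a b; apply diam_le, HCdiam, Htk.
  - apply Hd.
  - apply Hx.
  - apply Hx.
Qed.
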